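(* Let $\mathcal H$ be an infinite-dimensional separable Hilbert space with orthonormal basis $\{|\varphi_i\rangle\}_{i=1}^\infty$, and let $\big[\langle\varphi_i|\hat\varrho|\varphi_j\rangle\big]_{i,j=1}^{\infty}$ be an infinite complex matrix. This matrix represents a quantum state (i.e. is the matrix of a density operator in this basis) if and only if: (i) $\sum_{i,j=1}^{\infty}|\langle\varphi_i|\hat\varrho|\varphi_j\rangle|^2\le 1$; (ii) $\langle\varphi_i|\hat\varrho|\varphi_j\rangle=\overline{\langle\varphi_j|\hat\varrho|\varphi_i\rangle}$ for all $1\le i,j<\infty$; (iii) \[\lim_{n\to\infty}\sum_{k=0}^{n}(-1)^k\binom{n}{k}\sum_{i=1}^{\infty}\langle\varphi_i|\hat\varrho^{k+1}|\varphi_i\rangle=0;\] (iv) $\sum_{i=1}^{\infty}\langle\varphi_i|\hat\varrho|\varphi_i\rangle=1$.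
   Context: A density operator on $\mathcal H$ is an operator $\hat\varrho:\mathcal H\to\mathcal H$ defined on all of $\mathcal H$ which is positive, self-adjoint, and has trace $1$. When condition (i) holds, the matrix defines a unique Hilbert–Schmidt operator $\hat\varrho$ on $\mathcal H$ with the given matrix elements; powers refer to this operator. *)

From Stdlib Require Import Reals.
From Coquelicot Require Import Coquelicot.
Open Scope R_scope.

(* Hilbert space H = l^2(N) (realised by coordinates in the orthonormal basis
   {phi_i}, indexed from 0 instead of 1). *)
Definition vec := nat -> C.

(* sum of a complex series (real and imaginary parts; 0 if divergent) *)
Definition CSeries (a : nat -> C) : C :=
  (Series (fun n => fst (a n)), Series (fun n => snd (a n))).

Definition is_l2 (x : vec) : Prop := ex_series (fun n => (Cmod (x n)) ^ 2).

Definition inner (x y : vec) : C := CSeries (fun n => Cmult (Cconj (x n)) (y n)).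

Definition basis (i : nat) : vec := fun n => if Nat.eqb n i then RtoC 1 else RtoC 0.

Definition density_operator (A : vec -> vec) : Prop :=
  (forall x, is_l2 x -> is_l2 (A x)) /\
  (forall x y, is_l2 x -> is_l2 y ->
     A (fun n => Cplus (x n) (y n)) = (fun n => Cplus (A x n) (A y n))) /\
  (forall (c : C) x, is_l2 x -> A (fun n => Cmult c (x n)) = (fun n => Cmult c (A x n))) /\
  (forall x y, is_l2 x -> is_l2 y -> inner x (A y) = inner (A x) y) /\
  (forall x, is_l2 x -> 0 <= fst (inner x (A x))) /\
  is_series (fun i => inner (basis i) (A (basis i))) (RtoC 1).

Definition represents_state (M : nat -> nat -> C) : Prop :=
  exists A : vec -> vec, density_operator A /\
    forall i j, inner (basis i) (A (basis j)) = M i j.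

Definition mprod (M N : nat -> nat -> C) : nat -> nat -> C :=
  fun i j => CSeries (fun l => Cmult (M i l) (N l j)).

(* mpowS M k = matrix of rho^(k+1) *)
Fixpoint mpowS (M : nat -> nat -> C) (k : nat) : nat -> nat -> C :=
  match k with
  | O => M
  | S k' => mprod M (mpowS M k')
  end.

From Stdlib Require Import Reals Lra Psatz FunctionalExtensionality.
From Coquelicot Require Import Coquelicot.
Open Scope R_scope.

(** Forward direction. For a positive operator Cauchy--Schwarz gives
    [|rho_ij|^2 <= rho_ii rho_jj], which yields (i), and also [|rho x|^2 <= tr rho |x|^2], so
    [0 <= rho <= 1]. Then every [<phi_i|(1 - rho)^n rho|phi_i>] is nonnegative, nonincreasing
    in [n], telescopically summable in [n] and bounded by [rho_ii]; the sum in (iii) is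
    [tr ((1 - rho)^n rho)], which tends to [0] by Tannery's theorem.

    Backward direction. By (i) the matrix acts as a contraction on [l^2], and by (ii) it is
    symmetric on finitely supported vectors, hence everywhere by density. If [<x|rho x> < 0],
    log-convexity of [m |-> |(1 - rho)^m x|^2] keeps [|(1 - rho)^m rho x|^2] above some
    [delta > 0]; but this is at most [|x|^2 tr ((1 - rho)^(2m) rho^2) = |x|^2 (t_(2m) - t_(2m+1))],
    with [t_n] the sequence of (iii), which tends to [0]. *)

Ltac csolve := intros; unfold Cplus, Cmult, Copp, Cminus, Cconj, RtoC in *;
  apply injective_projections; simpl; ring.

Lemma filterlim_C_split (u : nat -> C) (l : C) :
  filterlim u eventually (locally l) <->
  is_lim_seq (fun n => fst (u n)) (fst l) /\ is_lim_seq (fun n => snd (u n)) (snd l).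
Proof.
  split.
  - intros H; split; apply (filterlim_locally (F := eventually)); intros eps;
      destruct (proj1 (filterlim_locally u l) H eps) as [N HN];
      exists N; intros n Hn; apply (HN n Hn).
  - intros [H1 H2]; apply filterlim_locally; intros eps.
    destruct (proj1 (filterlim_locally _ _) H1 eps) as [N1 HN1].
    destruct (proj1 (filterlim_locally _ _) H2 eps) as [N2 HN2].
    exists (max N1 N2); intros n Hn; split; [apply HN1 | apply HN2]; lia.
Qed.

Lemma sum_n_fst (a : nat -> C) n : fst (sum_n a n) = sum_n (fun k => fst (a k)) n.
Proof. induction n; [rewrite !sum_O | rewrite !sum_Sn; simpl; rewrite <- IHn]; reflexivity. Qed.

Lemma sum_n_snd (a : nat -> C) n : snd (sum_n a n) = sum_n (fun k => snd (a k)) n.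
Proof. induction n; [rewrite !sum_O | rewrite !sum_Sn; simpl; rewrite <- IHn]; reflexivity. Qed.

Lemma is_series_C_split (a : nat -> C) (l : C) :
  is_series a l <->
  is_series (fun n => fst (a n)) (fst l) /\ is_series (fun n => snd (a n)) (snd l).
Proof.
  unfold is_series; rewrite (filterlim_C_split (sum_n a)); unfold is_lim_seq.
  split; intros [H1 H2]; split; (eapply filterlim_ext; [|eassumption]); intros n;
    first [apply sum_n_fst | apply sum_n_snd | symmetry; apply sum_n_fst | symmetry; apply sum_n_snd].
Qed.

Lemma ex_series_Rplus (a b : nat -> R) :
  ex_series a -> ex_series b -> ex_series (fun n => a n + b n).
Proof. exact (ex_series_plus (K := R_AbsRing) (V := R_NormedModule) a b). Qed.

Lemma ex_series_Rscal (c : R) (a : nat -> R) : ex_series a -> ex_series (fun n => c * a n).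
Proof. exact (ex_series_scal_l (K := R_AbsRing) (V := R_NormedModule) c a). Qed.

Lemma ex_series_Rminus (a b : nat -> R) :
  ex_series a -> ex_series b -> ex_series (fun n => a n - b n).
Proof.
  intros Ha Hb; apply ex_series_Rplus; auto.
  exact (ex_series_opp (K := R_AbsRing) (V := R_NormedModule) b Hb).
Qed.

Lemma ex_series_Rle (a b : nat -> R) :
  (forall n, 0 <= a n <= b n) -> ex_series b -> ex_series a.
Proof.
  intros H; apply (ex_series_le (K := R_AbsRing) (V := R_CompleteNormedModule)); intros n.
  rewrite Rabs_pos_eq; apply H.
Qed.

Lemma ex_series_Rext (a b : nat -> R) : (forall n, a n = b n) -> ex_series a -> ex_series b.
Proof. exact (ex_series_ext (K := R_AbsRing) (V := R_NormedModule) a b). Qed.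

Definition ex_CSeries (a : nat -> C) : Prop :=
  ex_series (fun n => fst (a n)) /\ ex_series (fun n => snd (a n)).

Lemma is_series_CSeries a l : is_series a l -> CSeries a = l /\ ex_CSeries a.
Proof.
  intros H; apply is_series_C_split in H as [H1 H2]; split.
  - unfold CSeries; rewrite (is_series_unique _ _ H1), (is_series_unique _ _ H2).
    destruct l; reflexivity.
  - split; eexists; eauto.
Qed.

Lemma CSeries_ext a b : (forall n, a n = b n) -> CSeries a = CSeries b.
Proof. intros H; unfold CSeries; f_equal; apply Series_ext; intros; rewrite H; auto. Qed.

Lemma ex_CSeries_ext a b : (forall n, a n = b n) -> ex_CSeries a -> ex_CSeries b.
Proof.
  intros H [H1 H2]; split; [eapply ex_series_Rext, H1 | eapply ex_series_Rext, H2];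
    intros; cbv beta; rewrite H; reflexivity.
Qed.

Lemma ex_CSeries_plus a b : ex_CSeries a -> ex_CSeries b -> ex_CSeries (fun n => Cplus (a n) (b n)).
Proof. intros [H1 H2] [H3 H4]; split; apply ex_series_Rplus; auto. Qed.

Lemma CSeries_plus a b : ex_CSeries a -> ex_CSeries b ->
  CSeries (fun n => Cplus (a n) (b n)) = Cplus (CSeries a) (CSeries b).
Proof. intros [H1 H2] [H3 H4]; unfold CSeries; simpl; rewrite !Series_plus; auto. Qed.

Lemma ex_CSeries_scal c a : ex_CSeries a -> ex_CSeries (fun n => Cmult c (a n)).
Proof.
  intros [H1 H2]; split; simpl.
  - apply ex_series_Rext with (fun n => fst c * fst (a n) + (- snd c) * snd (a n)).
    { intros; ring. }
    apply ex_series_Rplus; apply ex_series_Rscal; auto.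
  - apply ex_series_Rext with (fun n => fst c * snd (a n) + snd c * fst (a n)).
    { intros; ring. }
    apply ex_series_Rplus; apply ex_series_Rscal; auto.
Qed.

Lemma CSeries_scal c a : ex_CSeries a -> CSeries (fun n => Cmult c (a n)) = Cmult c (CSeries a).
Proof.
  intros [H1 H2]; unfold CSeries; simpl.
  rewrite (Series_ext (fun n => fst c * fst (a n) - snd c * snd (a n))
             (fun n => fst c * fst (a n) + - snd c * snd (a n))) by (intros; ring).
  rewrite !Series_plus, !Series_scal_l by (apply ex_series_Rscal; auto).
  apply injective_projections; simpl; ring.
Qed.

Lemma CSeries_conj a : CSeries (fun n => Cconj (a n)) = Cconj (CSeries a).
Proof. unfold CSeries, Cconj; simpl; f_equal; apply Series_opp. Qed.

Lemma ex_CSeries_Cmod a : ex_series (fun n => Cmod (a n)) -> ex_CSeries a.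
Proof.
  intros H; split; apply ex_series_Rabs; (eapply ex_series_Rle; [|exact H]); intros n;
    split; try apply Rabs_pos.
  - apply re_le_Cmod.
  - apply Rle_trans with (2 := Rmax_Cmod (a n)), Rmax_r.
Qed.

Lemma sum_n_single {G : AbelianMonoid} (a : nat -> G) i :
  (forall n, n <> i -> a n = zero) -> sum_n a i = a i.
Proof.
  intros H; destruct i as [|i]; [apply sum_O|].
  assert (Z : forall m, (m <= i)%nat -> sum_n a m = zero).
  { induction m; intros Hm; [rewrite sum_O; apply H; lia|].
    rewrite sum_Sn, IHm, H by lia; apply plus_zero_l. }
  rewrite sum_Sn, Z by lia; apply plus_zero_l.
Qed.

Lemma is_series_finite_support {K : AbsRing} {V : NormedModule K} (a : nat -> V) N :
  (forall n, (N < n)%nat -> a n = zero) -> is_series a (sum_n a N).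
Proof.
  intros H; apply filterlim_ext_loc with (fun _ => sum_n a N); [|apply filterlim_const].
  exists N; intros n Hn; induction Hn; [reflexivity|].
  rewrite sum_Sn, <- IHHn, H by lia; symmetry; apply plus_zero_r.
Qed.

Lemma CSeries_finite_support (a : nat -> C) N :
  (forall n, (N < n)%nat -> a n = RtoC 0) -> CSeries a = sum_n a N.
Proof. intros H; apply is_series_CSeries, (is_series_finite_support (V := C_NormedModule)), H. Qed.

Lemma ex_CSeries_sum_n (F : nat -> nat -> C) N :
  (forall i, ex_CSeries (F i)) -> ex_CSeries (fun j => sum_n (fun i => F i j) N).
Proof.
  intros H; induction N.
  - eapply ex_CSeries_ext, H; intros; rewrite sum_O; reflexivity.
  - eapply ex_CSeries_ext, ex_CSeries_plus, H; [|exact IHN]; intros; rewrite sum_Sn; reflexivity.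
Qed.

Lemma CSeries_sum_n (F : nat -> nat -> C) N : (forall i, ex_CSeries (F i)) ->
  CSeries (fun j => sum_n (fun i => F i j) N) = sum_n (fun i => CSeries (F i)) N.
Proof.
  intros H; induction N.
  - rewrite sum_O; apply CSeries_ext; intros; apply sum_O.
  - rewrite sum_Sn, <- IHN, <- CSeries_plus; auto using ex_CSeries_sum_n.
    apply CSeries_ext; intros; rewrite sum_Sn; reflexivity.
Qed.

Lemma sum_n_Cconj (f : nat -> C) N : Cconj (sum_n f N) = sum_n (fun i => Cconj (f i)) N.
Proof.
  induction N; [rewrite !sum_O; reflexivity|].
  rewrite !sum_Sn, <- IHN; change plus with Cplus; csolve.
Qed.

Lemma is_series_R0 : is_series (fun _ : nat => 0) 0.
Proof.
  pose proof (is_series_finite_support (V := R_NormedModule) (fun _ => 0) 0 (fun _ _ => eq_refl)) as Z.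
  rewrite sum_O in Z; exact Z.
Qed.

Lemma Series_nonneg (a : nat -> R) : (forall n, 0 <= a n) -> ex_series a -> 0 <= Series a.
Proof.
  intros H Ha.
  replace 0 with (Series (fun _ => 0)).
  - apply Series_le; auto; intros n; split; [lra | apply H].
  - apply is_series_unique, is_series_R0.
Qed.

Lemma is_lim_seq_sum_f_R0 (a : nat -> R) : ex_series a -> is_lim_seq (sum_f_R0 a) (Series a).
Proof.
  intros H; apply Series_correct in H; eapply is_lim_seq_ext; [|exact H].
  intros n; apply sum_n_Reals.
Qed.

Lemma sum_f_R0_le_Series (a : nat -> R) N :
  (forall n, 0 <= a n) -> ex_series a -> sum_f_R0 a N <= Series a.
Proof.
  intros H Ha; apply (is_lim_seq_incr_compare (sum_f_R0 a)).
  - apply is_lim_seq_sum_f_R0; auto.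
  - intros n; simpl; specialize (H (S n)); lra.
Qed.

Lemma ex_series_bounded_nonneg (a : nat -> R) B :
  (forall n, 0 <= a n) -> (forall N, sum_f_R0 a N <= B) -> ex_series a /\ Series a <= B.
Proof.
  intros H HB.
  destruct (ex_finite_lim_seq_incr (sum_f_R0 a) B) as [l Hl]; auto.
  { intros n; simpl; specialize (H (S n)); lra. }
  assert (Hs : is_series a l).
  { eapply filterlim_ext; [|exact Hl]; intros n; symmetry; apply sum_n_Reals. }
  split; [exists l; auto|].
  rewrite (is_series_unique _ _ Hs).
  apply (is_lim_seq_le (sum_f_R0 a) (fun _ => B) l B); auto; apply is_lim_seq_const.
Qed.

Lemma Series_lin_comb (f : nat -> nat -> R) (c : nat -> R) n :
  (forall k, ex_series (f k)) ->
  ex_series (fun i => sum_f_R0 (fun k => c k * f k i) n) /\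
  Series (fun i => sum_f_R0 (fun k => c k * f k i) n) = sum_f_R0 (fun k => c k * Series (f k)) n.
Proof.
  intros H; induction n as [|n [E1 E2]]; simpl.
  - split; [apply ex_series_Rscal; auto | apply Series_scal_l].
  - split; [apply ex_series_Rplus; auto; apply ex_series_Rscal; auto|].
    rewrite Series_plus, E2, Series_scal_l; auto; apply ex_series_Rscal; auto.
Qed.

Lemma Series_tail_small (a : nat -> R) : ex_series a ->
  forall eps, 0 < eps -> exists N, forall n, (N <= n)%nat -> Rabs (Series a - sum_f_R0 a n) < eps.
Proof.
  intros H eps Heps.
  assert (L := is_lim_seq_sum_f_R0 a H); apply is_lim_seq_spec in L.
  destruct (L (mkposreal eps Heps)) as [N HN].
  exists N; intros n Hn; rewrite Rabs_minus_sym; exact (HN n Hn).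
Qed.

Lemma is_lim_seq_sum_f_R0_pointwise (g : nat -> nat -> R) K :
  (forall i, is_lim_seq (fun n => g n i) 0) -> is_lim_seq (fun n => sum_f_R0 (g n) K) 0.
Proof.
  intros H; induction K; simpl; [apply H|].
  replace 0 with (0 + 0) by ring; apply is_lim_seq_plus'; auto.
Qed.

Lemma is_lim_seq_Series_dominated (g : nat -> nat -> R) (d : nat -> R) :
  (forall n i, 0 <= g n i <= d i) -> ex_series d ->
  (forall i, is_lim_seq (fun n => g n i) 0) -> is_lim_seq (fun n => Series (g n)) 0.
Proof.
  intros H Hd Hl; apply is_lim_seq_spec; intros eps.
  assert (He : 0 < eps / 2) by (destruct eps; simpl; lra).
  destruct (Series_tail_small d Hd (eps / 2) He) as [K HK]; specialize (HK K (le_n K)).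
  assert (F := is_lim_seq_sum_f_R0_pointwise g K Hl); apply is_lim_seq_spec in F.
  destruct (F (mkposreal _ He)) as [N HN].
  exists N; intros n Hn; specialize (HN n Hn); simpl in HN.
  assert (Hg : ex_series (g n)) by (apply ex_series_Rle with d; auto).
  assert (T : sum_f_R0 (fun i => d i - g n i) K <= Series (fun i => d i - g n i)).
  { apply sum_f_R0_le_Series; [intros i; specialize (H n i); lra | apply ex_series_Rminus; auto]. }
  rewrite minus_sum, Series_minus in T; auto.
  assert (0 <= Series (g n)) by (apply Series_nonneg; auto; intros i; apply H).
  assert (0 <= sum_f_R0 (g n) K) by (apply cond_pos_sum; intros; apply H).
  apply Rabs_def2 in HN; apply Rabs_def2 in HK; rewrite Rminus_0_r in *.
  rewrite Rabs_pos_eq by lra; lra.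
Qed.

(** * The Hilbert space [l^2] *)

Definition vplus (x y : vec) : vec := fun n => Cplus (x n) (y n).
Definition vscal (c : C) (x : vec) : vec := fun n => Cmult c (x n).
Definition vminus (x y : vec) : vec := fun n => Cminus (x n) (y n).
Definition norm2 (x : vec) : R := Series (fun n => Cmod (x n) ^ 2).

Lemma Cmod2_components z : Cmod z ^ 2 = fst z ^ 2 + snd z ^ 2.
Proof. apply Cmod2_alt. Qed.

Lemma fst2_le_Cmod2 z : fst z ^ 2 <= Cmod z ^ 2.
Proof. rewrite Cmod2_components; pose proof (pow2_ge_0 (snd z)); lra. Qed.

Lemma Cmod2_plus_le a b : Cmod (Cplus a b) ^ 2 <= 2 * Cmod a ^ 2 + 2 * Cmod b ^ 2.
Proof.
  destruct a as [a1 a2], b as [b1 b2]; rewrite !Cmod2_components; simpl.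
  pose proof (pow2_ge_0 (a1 - b1)); pose proof (pow2_ge_0 (a2 - b2)); nra.
Qed.

Lemma Cmod2_minus_le a b : Cmod (Cminus a b) ^ 2 <= 2 * Cmod a ^ 2 + 2 * Cmod b ^ 2.
Proof. rewrite <- (Cmod_opp b); apply Cmod2_plus_le. Qed.

Lemma is_l2_plus x y : is_l2 x -> is_l2 y -> is_l2 (vplus x y).
Proof.
  intros Hx Hy; apply ex_series_Rle with (fun n => 2 * Cmod (x n) ^ 2 + 2 * Cmod (y n) ^ 2).
  - intros n; split; [apply pow2_ge_0 | apply Cmod2_plus_le].
  - apply ex_series_Rplus; apply ex_series_Rscal; auto.
Qed.

Lemma is_l2_scal c x : is_l2 x -> is_l2 (vscal c x).
Proof.
  intros Hx; apply ex_series_Rext with (fun n => Cmod c ^ 2 * Cmod (x n) ^ 2).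
  - intros n; unfold vscal; rewrite Cmod_mult; ring.
  - apply ex_series_Rscal; auto.
Qed.

Lemma vminus_vplus x y : vminus x y = vplus x (vscal (RtoC (-1)) y).
Proof. apply functional_extensionality; intros n; unfold vminus, vplus, vscal; csolve. Qed.

Lemma is_l2_minus x y : is_l2 x -> is_l2 y -> is_l2 (vminus x y).
Proof. intros; rewrite vminus_vplus; apply is_l2_plus, is_l2_scal; auto. Qed.

Lemma is_l2_basis i : is_l2 (basis i).
Proof.
  eexists; apply (is_series_finite_support (V := R_NormedModule) _ i); intros n Hn.
  unfold basis; rewrite (proj2 (Nat.eqb_neq n i)) by lia; rewrite Cmod_0; apply pow_i; lia.
Qed.

Lemma ex_CSeries_inner x y : is_l2 x -> is_l2 y -> ex_CSeries (fun n => Cmult (Cconj (x n)) (y n)).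
Proof.
  intros Hx Hy; apply ex_CSeries_Cmod.
  apply ex_series_Rle with (fun n => / 2 * (Cmod (x n) ^ 2 + Cmod (y n) ^ 2)).
  - intros n; rewrite Cmod_mult, Cmod_conj.
    pose proof (Cmod_ge_0 (x n)); pose proof (Cmod_ge_0 (y n));
      pose proof (pow2_ge_0 (Cmod (x n) - Cmod (y n))); split; nra.
  - apply ex_series_Rscal, ex_series_Rplus; auto.
Qed.

Lemma inner_plus_r x y z : is_l2 x -> is_l2 y -> is_l2 z ->
  inner x (vplus y z) = Cplus (inner x y) (inner x z).
Proof.
  intros; unfold inner, vplus; rewrite <- CSeries_plus by (apply ex_CSeries_inner; auto).
  apply CSeries_ext; csolve.
Qed.

Lemma inner_scal_r x c y : is_l2 x -> is_l2 y -> inner x (vscal c y) = Cmult c (inner x y).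
Proof.
  intros; unfold inner, vscal; rewrite <- CSeries_scal by (apply ex_CSeries_inner; auto).
  apply CSeries_ext; csolve.
Qed.

Lemma inner_conj x y : inner y x = Cconj (inner x y).
Proof. unfold inner; rewrite <- CSeries_conj; apply CSeries_ext; csolve. Qed.

Lemma inner_plus_l x y z : is_l2 x -> is_l2 y -> is_l2 z ->
  inner (vplus y z) x = Cplus (inner y x) (inner z x).
Proof.
  intros; rewrite (inner_conj x), inner_plus_r, (inner_conj y x), (inner_conj z x) by auto.
  csolve.
Qed.

Lemma inner_scal_l x c y : is_l2 x -> is_l2 y -> inner (vscal c y) x = Cmult (Cconj c) (inner y x).
Proof. intros; rewrite (inner_conj x), inner_scal_r, (inner_conj y x) by auto; csolve. Qed.

Lemma inner_minus_r x y z : is_l2 x -> is_l2 y -> is_l2 z ->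
  inner x (vminus y z) = Cminus (inner x y) (inner x z).
Proof.
  intros; rewrite vminus_vplus, inner_plus_r, inner_scal_r; auto; [csolve | apply is_l2_scal; auto].
Qed.

Lemma inner_minus_l x y z : is_l2 x -> is_l2 y -> is_l2 z ->
  inner (vminus y z) x = Cminus (inner y x) (inner z x).
Proof.
  intros; rewrite vminus_vplus, inner_plus_l, inner_scal_l; auto; [csolve | apply is_l2_scal; auto].
Qed.

Lemma Re_inner_self x : fst (inner x x) = norm2 x.
Proof.
  unfold inner, norm2, CSeries; cbn [fst]; apply Series_ext; intros n.
  rewrite Cmod2_components; simpl; ring.
Qed.

Lemma norm2_nonneg x : is_l2 x -> 0 <= norm2 x.
Proof. intros H; apply Series_nonneg; auto; intros; apply pow2_ge_0. Qed.

Lemma inner_basis i x : inner (basis i) x = x i.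
Proof.
  assert (Hoff : forall n, n <> i -> Cmult (Cconj (basis i n)) (x n) = RtoC 0).
  { intros n Hn; unfold basis; rewrite (proj2 (Nat.eqb_neq n i)) by lia; csolve. }
  unfold inner; rewrite (CSeries_finite_support _ i) by (intros; apply Hoff; lia).
  rewrite sum_n_single by exact Hoff.
  unfold basis; rewrite Nat.eqb_refl; csolve.
Qed.

Lemma norm2_minus u w : is_l2 u -> is_l2 w ->
  norm2 (vminus u w) = norm2 u - 2 * fst (inner u w) + norm2 w.
Proof.
  intros Hu Hw; rewrite <- !Re_inner_self.
  rewrite inner_minus_l, !inner_minus_r, (inner_conj u w); auto; try apply is_l2_minus; auto.
  unfold Cminus, Cplus, Copp, Cconj; cbn [fst]; ring.
Qed.

Lemma quadratic_nonneg_le a b Z : 0 <= a -> 0 <= b -> 0 <= Z ->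
  (forall t, 0 <= a + 2 * t * Z + t ^ 2 * Z * b) -> Z <= a * b.
Proof.
  intros Ha Hb HZ H.
  destruct (Req_dec b 0) as [Hb0|Hb0].
  - subst; destruct (Req_dec Z 0) as [HZ0|HZ0]; [lra|].
    specialize (H (- (a + 1) / (2 * Z))).
    replace (a + 2 * (- (a + 1) / (2 * Z)) * Z + (- (a + 1) / (2 * Z)) ^ 2 * Z * 0) with (-1)
      in H by (field; auto); lra.
  - specialize (H (-1 / b)).
    replace (a + 2 * (-1 / b) * Z + (-1 / b) ^ 2 * Z * b) with (a - Z / b) in H by (field; auto).
    assert (0 <= (a - Z / b) * b) by (apply Rmult_le_pos; lra).
    replace ((a - Z / b) * b) with (a * b - Z) in H0 by (field; auto); lra.
Qed.

(** Cauchy--Schwarz for a positive semidefinite Hermitian form [q], written through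
    [q(u + s w, u + s w) = a + s z + s^* z^* + s s^* b] with [a = q(u,u)], [z = q(u,w)],
    [b = q(w,w)]. *)
Lemma Hermitian_form_Cauchy_Schwarz (a z b : C) :
  (forall s : C, 0 <= fst (Cplus (Cplus (Cplus a (Cmult s z)) (Cmult (Cconj s) (Cconj z)))
                              (Cmult (Cmult s (Cconj s)) b))) ->
  0 <= fst a -> 0 <= fst b -> Cmod z ^ 2 <= fst a * fst b.
Proof.
  intros Hpos Ha Hb; rewrite Cmod2_components.
  apply quadratic_nonneg_le; auto; [nra|].
  intros t; specialize (Hpos (Cmult (RtoC t) (Cconj z))).
  destruct a as [a1 a2], z as [z1 z2], b as [b1 b2].
  unfold Cplus, Cmult, Cconj, RtoC in *; simpl in *; nra.
Qed.

Lemma inner_expand u w s : is_l2 u -> is_l2 w ->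
  inner (vplus u (vscal s w)) (vplus u (vscal s w)) =
  Cplus (Cplus (Cplus (inner u u) (Cmult s (inner u w))) (Cmult (Cconj s) (Cconj (inner u w))))
        (Cmult (Cmult s (Cconj s)) (inner w w)).
Proof.
  intros Hu Hw; assert (Hs : is_l2 (vscal s w)) by (apply is_l2_scal; auto).
  rewrite inner_plus_l, !inner_plus_r, !inner_scal_l, !inner_scal_r, (inner_conj u w);
    auto; try apply is_l2_plus; auto; csolve.
Qed.

Lemma Cauchy_Schwarz u w : is_l2 u -> is_l2 w -> Cmod (inner u w) ^ 2 <= norm2 u * norm2 w.
Proof.
  intros Hu Hw; rewrite <- !Re_inner_self.
  apply Hermitian_form_Cauchy_Schwarz; rewrite ?Re_inner_self; try apply norm2_nonneg; auto.
  intros s; rewrite <- inner_expand, Re_inner_self by auto.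
  apply norm2_nonneg, is_l2_plus, is_l2_scal; auto.
Qed.

(** * Finite differences *)

Fixpoint fdiff (n : nat) (a : nat -> R) (k : nat) : R :=
  match n with O => a k | S n' => fdiff n' a k - fdiff n' a (S k) end.

(** Binomial coefficients by Pascal's rule; unlike [Binomial.C n j], which is computed with
    truncated subtraction, [binom n j] vanishes for [j > n]. *)
Fixpoint binom (n j : nat) : nat :=
  match n, j with
  | O, O => 1%nat
  | O, S _ => 0%nat
  | S n', O => 1%nat
  | S n', S j' => (binom n' j' + binom n' (S j'))%nat
  end.

Lemma binom_gt n j : (n < j)%nat -> binom n j = 0%nat.
Proof.
  revert j; induction n; intros j H; destruct j; simpl; try lia; auto.
  rewrite !IHn by lia; reflexivity.
Qed.

Lemma binom_C n j : (j <= n)%nat -> INR (binom n j) = Binomial.C n j.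
Proof.
  assert (C0 : forall m, Binomial.C m 0 = 1).
  { intros m; unfold Binomial.C; rewrite Nat.sub_0_r; simpl; field; apply INR_fact_neq_0. }
  assert (Cdiag : forall m, Binomial.C m m = 1).
  { intros m; unfold Binomial.C; rewrite Nat.sub_diag; simpl; field; apply INR_fact_neq_0. }
  revert j; induction n; intros j H.
  - destruct j; [|lia]; simpl; rewrite C0; reflexivity.
  - destruct j; [simpl; rewrite C0; reflexivity|].
    simpl binom; rewrite plus_INR; destruct (Nat.eq_dec j n).
    + subst; rewrite IHn, binom_gt, !Cdiag by lia; simpl; ring.
    + rewrite !IHn by lia; apply pascal; lia.
Qed.

Lemma sum_f_R0_shift (f : nat -> R) n :
  sum_f_R0 f (S n) = f 0%nat + sum_f_R0 (fun j => f (S j)) n.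
Proof. induction n; [simpl; ring | rewrite tech5, IHn; simpl; ring]. Qed.

Lemma fdiff_binom n a k :
  fdiff n a k = sum_f_R0 (fun j => (-1) ^ j * INR (binom n j) * a (k + j)%nat) n.
Proof.
  revert k; induction n; intros k; [simpl; rewrite Nat.add_0_r; ring|].
  simpl fdiff; rewrite !IHn, sum_f_R0_shift.
  set (P := sum_f_R0 (fun j => (-1) ^ j * INR (binom n j) * a (k + j)%nat) n).
  set (Q := sum_f_R0 (fun j => (-1) ^ j * INR (binom n j) * a (S k + j)%nat) n).
  set (P' := sum_f_R0 (fun j => (-1) ^ S j * INR (binom n (S j)) * a (k + S j)%nat) n).
  assert (EP : P' = P - a k).
  { assert (E := sum_f_R0_shift (fun j => (-1) ^ j * INR (binom n j) * a (k + j)%nat) n).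
    rewrite tech5, binom_gt, Nat.add_0_r in E by lia.
    replace (binom n 0) with 1%nat in E by (destruct n; auto).
    fold P P' in E; simpl in E; lra. }
  assert (ES : sum_f_R0 (fun j => (-1) ^ S j * INR (binom (S n) (S j)) * a (k + S j)%nat) n
               = P' - Q).
  { unfold P', Q; rewrite <- minus_sum; apply sum_eq; intros j _.
    simpl binom; rewrite plus_INR.
    replace (k + S j)%nat with (S k + j)%nat by lia; simpl pow; ring. }
  rewrite ES; simpl; rewrite Nat.add_0_r; lra.
Qed.

Lemma fdiff_binomial n a k :
  fdiff n a k = sum_f_R0 (fun j => (-1) ^ j * Binomial.C n j * a (k + j)%nat) n.
Proof. rewrite fdiff_binom; apply sum_eq; intros j Hj; rewrite binom_C by lia; reflexivity. Qed.

Record symmetric_op (A : vec -> vec) : Prop := {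
  sym_l2 : forall x, is_l2 x -> is_l2 (A x);
  sym_plus : forall x y, is_l2 x -> is_l2 y -> A (vplus x y) = vplus (A x) (A y);
  sym_scal : forall c x, is_l2 x -> A (vscal c x) = vscal c (A x);
  sym_inner : forall x y, is_l2 x -> is_l2 y -> inner x (A y) = inner (A x) y }.

Lemma iter_l2 (f : vec -> vec) : (forall x, is_l2 x -> is_l2 (f x)) ->
  forall n x, is_l2 x -> is_l2 (Nat.iter n f x).
Proof. intros H n; induction n; simpl; auto. Qed.

Lemma iter_comm (f g : vec -> vec) : (forall z, is_l2 z -> is_l2 (g z)) ->
  (forall z, is_l2 z -> f (g z) = g (f z)) ->
  forall n z, is_l2 z -> f (Nat.iter n g z) = Nat.iter n g (f z).
Proof.
  intros Hg H n; induction n; intros z Hz; simpl; auto.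
  rewrite H, IHn; auto; apply iter_l2; auto.
Qed.

Lemma iter_symmetric A : symmetric_op A -> forall n, symmetric_op (Nat.iter n A).
Proof.
  intros H n; induction n as [|n [I1 I2 I3 I4]]; [split; simpl; auto|].
  split; simpl; intros.
  - apply (sym_l2 _ H); auto.
  - rewrite I2, (sym_plus _ H); auto.
  - rewrite I3, (sym_scal _ H); auto.
  - rewrite (sym_inner _ H), I4, <- Nat.iter_succ_r; auto; apply (sym_l2 _ H); auto.
Qed.

Definition compl (A : vec -> vec) (z : vec) : vec := vminus z (A z).
Definition mixed_pow (A : vec -> vec) (y : vec) (n k : nat) : vec :=
  Nat.iter n (compl A) (Nat.iter k A y).

Section SymmetricOperator.
Variable A : vec -> vec.
Hypothesis HA : symmetric_op A.

Let A_l2 := sym_l2 A HA.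

Lemma sym_minus x y : is_l2 x -> is_l2 y -> A (vminus x y) = vminus (A x) (A y).
Proof.
  intros Hx Hy; rewrite !vminus_vplus, (sym_plus _ HA), (sym_scal _ HA); auto.
  apply is_l2_scal; auto.
Qed.

Lemma compl_l2 x : is_l2 x -> is_l2 (compl A x).
Proof. intros Hx; apply is_l2_minus; auto. Qed.

Lemma compl_symmetric : symmetric_op (compl A).
Proof.
  split; unfold compl; intros.
  - apply compl_l2; auto.
  - rewrite (sym_plus _ HA) by auto; apply functional_extensionality; intros n.
    unfold vminus, vplus; csolve.
  - rewrite (sym_scal _ HA) by auto; apply functional_extensionality; intros n.
    unfold vminus, vscal; csolve.
  - rewrite inner_minus_r, inner_minus_l, (sym_inner _ HA); auto.
Qed.

Lemma iter_compl_comm k n z : is_l2 z ->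
  Nat.iter k A (Nat.iter n (compl A) z) = Nat.iter n (compl A) (Nat.iter k A z).
Proof.
  revert n z; induction k; intros n z Hz; simpl; auto.
  rewrite IHk by auto; apply iter_comm; auto using compl_l2, iter_l2.
  intros; unfold compl; rewrite sym_minus; auto.
Qed.

Lemma mixed_pow_l2 y n k : is_l2 y -> is_l2 (mixed_pow A y n k).
Proof. intros Hy; apply iter_l2, iter_l2; auto using compl_l2. Qed.

Lemma mixed_pow_succ_r y n k : is_l2 y -> A (mixed_pow A y n k) = mixed_pow A y n (S k).
Proof. intros Hy; exact (iter_compl_comm 1 n _ (iter_l2 _ A_l2 k y Hy)). Qed.

Lemma mixed_pow_succ_l y n k : is_l2 y ->
  mixed_pow A y (S n) k = vminus (mixed_pow A y n k) (mixed_pow A y n (S k)).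
Proof. intros Hy; rewrite <- mixed_pow_succ_r by auto; reflexivity. Qed.

Lemma mixed_pow_adjoint x w n k : is_l2 x -> is_l2 w ->
  inner (mixed_pow A x n k) w = inner x (mixed_pow A w n k).
Proof.
  intros Hx Hw; unfold mixed_pow.
  rewrite <- (sym_inner _ (iter_symmetric _ compl_symmetric n)),
          <- (sym_inner _ (iter_symmetric _ HA k)), iter_compl_comm;
    auto using iter_l2, compl_l2.
Qed.

Lemma mixed_pow_mixed_pow y a b n k : is_l2 y ->
  mixed_pow A (mixed_pow A y a b) n k = mixed_pow A y (n + a) (k + b).
Proof.
  intros Hy; unfold mixed_pow; rewrite iter_compl_comm, !Nat.iter_add; auto using iter_l2.
Qed.

Lemma inner_mixed_pow y n1 k1 n2 k2 : is_l2 y ->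
  inner (mixed_pow A y n1 k1) (mixed_pow A y n2 k2) = inner y (mixed_pow A y (n1 + n2) (k1 + k2)).
Proof.
  intros Hy; rewrite mixed_pow_adjoint, mixed_pow_mixed_pow; auto using mixed_pow_l2.
Qed.

Lemma Re_inner_mixed_pow_succ_l y n k : is_l2 y ->
  fst (inner y (mixed_pow A y (S n) k))
  = fst (inner y (mixed_pow A y n k)) - fst (inner y (mixed_pow A y n (S k))).
Proof.
  intros Hy; rewrite mixed_pow_succ_l, inner_minus_r by auto using mixed_pow_l2.
  unfold Cminus, Cplus, Copp; cbn [fst]; ring.
Qed.

Lemma Re_inner_mixed_pow_fdiff w y n k : is_l2 w -> is_l2 y ->
  fst (inner w (mixed_pow A y n k)) = fdiff n (fun j => fst (inner w (Nat.iter j A y))) k.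
Proof.
  intros Hw Hy; revert k; induction n; intros k; [reflexivity|].
  rewrite mixed_pow_succ_l, inner_minus_r by auto using mixed_pow_l2.
  simpl fdiff; rewrite <- !IHn; simpl; ring.
Qed.

Lemma Im_inner_mixed_pow y n k : is_l2 y -> snd (inner y (mixed_pow A y n k)) = 0.
Proof.
  intros Hy; assert (E := mixed_pow_adjoint y y n k Hy Hy); rewrite inner_conj in E.
  destruct (inner y (mixed_pow A y n k)) as [a b]; unfold Cconj in E; simpl in *.
  inversion E; lra.
Qed.

End SymmetricOperator.

Definition matrix_op (M : nat -> nat -> C) (x : vec) : vec :=
  fun i => CSeries (fun j => Cmult (M i j) (x j)).

Definition has_matrix (A : vec -> vec) (M : nat -> nat -> C) : Prop :=
  forall w, is_l2 w -> forall i, A w i = matrix_op M w i.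

Definition Hilbert_Schmidt_le1 (M : nat -> nat -> C) : Prop :=
  forall N : nat, sum_n (fun i => sum_n (fun j => (Cmod (M i j)) ^ 2) N) N <= 1.

Definition alternating_trace_vanishes (M : nat -> nat -> C) : Prop :=
  exists tr : nat -> C,
    (forall k : nat, is_series (fun i => mpowS M k i i) (tr k)) /\
    filterlim (fun n : nat => sum_n (fun k => Cmult (RtoC ((-1) ^ k * Binomial.C n k)) (tr k)) n)
      eventually (locally (RtoC 0)).

Lemma matrix_op_basis M j i : matrix_op M (basis j) i = M i j.
Proof.
  assert (Hoff : forall n, n <> j -> Cmult (M i n) (basis j n) = RtoC 0).
  { intros n Hn; unfold basis; rewrite (proj2 (Nat.eqb_neq n j)) by lia; csolve. }
  unfold matrix_op; rewrite (CSeries_finite_support _ j) by (intros; apply Hoff; lia).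
  rewrite sum_n_single by exact Hoff.
  unfold basis; rewrite Nat.eqb_refl; csolve.
Qed.

Lemma mpowS_iter A M : (forall x, is_l2 x -> is_l2 (A x)) -> has_matrix A M ->
  forall k i j, mpowS M k i j = Nat.iter (S k) A (basis j) i.
Proof.
  intros Hl2 HM k; induction k; intros i j.
  - simpl; rewrite HM, matrix_op_basis by apply is_l2_basis; reflexivity.
  - change (Nat.iter (S (S k)) A (basis j)) with (A (Nat.iter (S k) A (basis j))).
    rewrite HM by (apply iter_l2, is_l2_basis; auto).
    apply CSeries_ext; intros l; rewrite IHk; reflexivity.
Qed.

(** [tr ((1 - A)^n A) = sum_k (-1)^k C(n,k) tr (A^(k+1))], computed diagonal entry by diagonal
    entry: this turns condition (iii) into a statement about the vectors [(1 - A)^n A e_i]. *)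
Lemma alternating_trace_sum A M (tr : nat -> C) : symmetric_op A -> has_matrix A M ->
  (forall k, is_series (fun i => mpowS M k i i) (tr k)) ->
  forall n, ex_series (fun i => fst (inner (basis i) (mixed_pow A (basis i) n 1))) /\
    fst (sum_n (fun k => Cmult (RtoC ((-1) ^ k * Binomial.C n k)) (tr k)) n) =
    Series (fun i => fst (inner (basis i) (mixed_pow A (basis i) n 1))).
Proof.
  intros HA HM Htr n.
  set (b := fun k i => fst (inner (basis i) (Nat.iter (S k) A (basis i)))).
  assert (Hb : forall k, ex_series (b k) /\ fst (tr k) = Series (b k)).
  { intros k; destruct (is_series_CSeries _ _ (Htr k)) as [E [C1 _]].
    assert (Eb : forall i, fst (mpowS M k i i) = b k i).
    { intros i; unfold b; rewrite inner_basis, (mpowS_iter A M (sym_l2 A HA) HM); reflexivity. }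
    split; [exact (ex_series_Rext _ _ Eb C1)|].
    rewrite <- E; apply Series_ext, Eb. }
  destruct (Series_lin_comb b (fun k => (-1) ^ k * Binomial.C n k) n) as [S1 S2].
  { intros k; apply Hb. }
  assert (Eterm : forall i, sum_f_R0 (fun k => (-1) ^ k * Binomial.C n k * b k i) n =
                            fst (inner (basis i) (mixed_pow A (basis i) n 1))).
  { intros i; rewrite Re_inner_mixed_pow_fdiff, fdiff_binomial by auto using is_l2_basis.
    reflexivity. }
  split; [exact (ex_series_Rext _ _ Eterm S1)|].
  rewrite <- (Series_ext _ _ Eterm), S2, sum_n_fst, sum_n_Reals.
  apply sum_eq; intros k _; unfold Cmult, RtoC; cbn [fst snd].
  rewrite (proj2 (Hb k)); ring.
Qed.

(** * Positive operators *)

Section PositiveOperator.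
Variable A : vec -> vec.
Hypothesis HA : symmetric_op A.
Hypothesis Hpos : forall x, is_l2 x -> 0 <= fst (inner x (A x)).

Let A_l2 := sym_l2 A HA.

Lemma positive_Cauchy_Schwarz u w : is_l2 u -> is_l2 w ->
  Cmod (inner u (A w)) ^ 2 <= fst (inner u (A u)) * fst (inner w (A w)).
Proof.
  intros Hu Hw; apply Hermitian_form_Cauchy_Schwarz; auto.
  intros s; assert (Hs : is_l2 (vscal s w)) by (apply is_l2_scal; auto).
  specialize (Hpos (vplus u (vscal s w)) ltac:(apply is_l2_plus; auto)).
  rewrite (sym_plus _ HA), (sym_scal _ HA) in Hpos by auto.
  rewrite inner_plus_l, !inner_plus_r, !inner_scal_l, !inner_scal_r in Hpos;
    auto using is_l2_plus, is_l2_scal.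
  rewrite (sym_inner _ HA w u), (inner_conj u (A w)) in Hpos by auto.
  replace (fst _) with (fst (Cplus (Cplus (Cplus (inner u (A u)) (Cmult s (inner u (A w))))
    (Cmult (Cconj s) (Cconj (inner u (A w))))) (Cmult (Cmult s (Cconj s)) (inner w (A w)))))
    in Hpos by (f_equal; csolve).
  exact Hpos.
Qed.

Section TraceOne.
Variable M : nat -> nat -> C.
Hypothesis HM : forall i j, inner (basis i) (A (basis j)) = M i j.
Hypothesis Htr : is_series (fun i => fst (M i i)) 1.

Lemma diag_nonneg i : 0 <= fst (M i i).
Proof. rewrite <- HM; apply Hpos, is_l2_basis. Qed.

Lemma Cmod_entry_le i j : Cmod (M i j) ^ 2 <= fst (M i i) * fst (M j j).
Proof. rewrite <- !HM; apply positive_Cauchy_Schwarz; apply is_l2_basis. Qed.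

Lemma Series_diag : Series (fun i => fst (M i i)) = 1.
Proof. apply is_series_unique, Htr. Qed.

Lemma norm2_le_of_trace_one x : is_l2 x -> norm2 (A x) <= norm2 x.
Proof.
  intros Hx; set (d := fun i => fst (M i i)).
  assert (Hd : ex_series d) by (exists 1; auto).
  assert (Hcol : forall l, norm2 (A (basis l)) <= d l).
  { intros l; unfold norm2; rewrite <- (Rmult_1_l (d l)), <- Series_diag, <- Series_scal_r.
    apply Series_le; [|apply ex_series_scal_r; auto]; intros i; split; [apply pow2_ge_0|].
    rewrite <- (inner_basis i (A (basis l))), HM; apply Cmod_entry_le. }
  assert (Hcoord : forall l, Cmod (A x l) ^ 2 <= d l * norm2 x).
  { intros l; rewrite <- (inner_basis l (A x)), (sym_inner _ HA) by auto using is_l2_basis.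
    eapply Rle_trans; [apply Cauchy_Schwarz; auto using is_l2_basis|].
    apply Rmult_le_compat_r; [apply norm2_nonneg|]; auto. }
  unfold norm2 at 1; rewrite <- (Rmult_1_l (norm2 x)), <- Series_diag, <- Series_scal_r.
  apply Series_le; [|apply ex_series_scal_r; auto]; intros l; split; [apply pow2_ge_0 | apply Hcoord].
Qed.

Lemma trace_one_Hilbert_Schmidt : Hilbert_Schmidt_le1 M.
Proof.
  intros N; set (d := fun i => fst (M i i)).
  assert (S1 : sum_f_R0 d N <= 1).
  { rewrite <- Series_diag; apply sum_f_R0_le_Series; [apply diag_nonneg | exists 1; auto]. }
  assert (S0 : 0 <= sum_f_R0 d N) by (apply cond_pos_sum, diag_nonneg).
  rewrite sum_n_Reals, (sum_eq _ (fun i => sum_f_R0 (fun j => Cmod (M i j) ^ 2) N))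
    by (intros; apply sum_n_Reals).
  apply Rle_trans with (sum_f_R0 (fun i => d i * sum_f_R0 d N) N).
  - apply sum_Rle; intros i _; rewrite scal_sum; apply sum_Rle; intros j _.
    rewrite Rmult_comm; apply Cmod_entry_le.
  - rewrite <- scal_sum; nra.
Qed.

End TraceOne.

Section Contraction.
Hypothesis Hcontr : forall x, is_l2 x -> norm2 (A x) <= norm2 x.

Lemma positive_contraction_bounds z : is_l2 z ->
  norm2 (A z) <= fst (inner z (A z)) <= norm2 z.
Proof.
  intros Hz.
  set (p := fst (inner z (A z))); set (m := norm2 (A z)).
  assert (Hp0 : 0 <= p) by (apply Hpos; auto).
  assert (Hm0 : 0 <= m) by (apply norm2_nonneg; auto).
  assert (Hr : fst (inner (A z) (A (A z))) <= m).
  { set (r := fst (inner (A z) (A (A z)))).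
    assert (r ^ 2 <= m * m).
    { eapply Rle_trans; [apply fst2_le_Cmod2|].
      eapply Rle_trans; [apply Cauchy_Schwarz; auto|].
      apply Rmult_le_compat_l; auto. }
    assert (0 <= r) by (apply Hpos; auto); nra. }
  assert (Hmp : m <= p).
  { assert (E : fst (inner z (A (A z))) = m) by (rewrite (sym_inner _ HA), Re_inner_self; auto).
    assert (C1 := positive_Cauchy_Schwarz z (A z) Hz (A_l2 z Hz)).
    assert (C2 := fst2_le_Cmod2 (inner z (A (A z)))); rewrite E in C2.
    assert (0 <= fst (inner (A z) (A (A z)))) by (apply Hpos; auto).
    fold p in C1; nra. }
  split; auto.
  assert (p ^ 2 <= norm2 z * m).
  { eapply Rle_trans; [apply fst2_le_Cmod2 | apply Cauchy_Schwarz; auto]. }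
  pose proof (norm2_nonneg z Hz); nra.
Qed.

(** Writing [n = 2p + e] and [k = 2q + f], the number below is [<v, B v>] with
    [v = (1 - A)^p A^q y] and [B] one of [1], [A], [1 - A], [A (1 - A)]; each of these
    is positive because [A^2 <= A <= 1]. *)
Lemma Re_inner_mixed_pow_nonneg y n k : is_l2 y -> 0 <= fst (inner y (mixed_pow A y n k)).
Proof.
  intros Hy.
  destruct (Nat.Even_or_Odd n) as [[p Ep]|[p Ep]];
    destruct (Nat.Even_or_Odd k) as [[q Eq]|[q Eq]]; subst;
    set (v := mixed_pow A y p q); assert (Hv : is_l2 v) by (apply mixed_pow_l2; auto).
  - replace (2 * p)%nat with (p + p)%nat by lia; replace (2 * q)%nat with (q + q)%nat by lia.
    rewrite <- inner_mixed_pow, Re_inner_self by auto; apply norm2_nonneg; auto.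
  - replace (2 * p)%nat with (p + p)%nat by lia; replace (2 * q + 1)%nat with (q + S q)%nat by lia.
    rewrite <- inner_mixed_pow, <- mixed_pow_succ_r by auto; apply Hpos; auto.
  - replace (2 * p + 1)%nat with (p + S p)%nat by lia; replace (2 * q)%nat with (q + q)%nat by lia.
    rewrite <- inner_mixed_pow, mixed_pow_succ_l, <- mixed_pow_succ_r, inner_minus_r by auto.
    unfold Cminus, Cplus, Copp; cbn [fst]; fold v.
    rewrite Re_inner_self; destruct (positive_contraction_bounds v Hv); lra.
  - replace (2 * p + 1)%nat with (p + S p)%nat by lia; replace (2 * q + 1)%nat with (q + S q)%nat by lia.
    rewrite <- inner_mixed_pow, mixed_pow_succ_l, <- !mixed_pow_succ_r, inner_minus_r by auto.
    unfold Cminus, Cplus, Copp; cbn [fst]; fold v.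
    rewrite (sym_inner _ HA v (A v)), Re_inner_self by auto.
    destruct (positive_contraction_bounds v Hv); lra.
Qed.

Lemma Re_inner_mixed_pow_le y n k : is_l2 y ->
  fst (inner y (mixed_pow A y n (S k))) <= fst (inner y (mixed_pow A y 0 1)).
Proof.
  intros Hy; assert (P := fun n k => Re_inner_mixed_pow_nonneg y n k Hy).
  assert (Hn : forall n k, fst (inner y (mixed_pow A y n k)) <= fst (inner y (mixed_pow A y 0 k))).
  { intros n0 k0; induction n0; [lra|].
    rewrite Re_inner_mixed_pow_succ_l by auto; specialize (P n0 (S k0)); lra. }
  assert (Hk : forall k, fst (inner y (mixed_pow A y 0 (S k))) <= fst (inner y (mixed_pow A y 0 1))).
  { induction k0; [lra|].
    assert (E := Re_inner_mixed_pow_succ_l A HA y 0 (S k0) Hy); specialize (P 1%nat (S k0)); lra. }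
  specialize (Hn n (S k)); specialize (Hk k); lra.
Qed.

Lemma Re_inner_mixed_pow_summable y : is_l2 y ->
  ex_series (fun n => fst (inner y (mixed_pow A y n 1))).
Proof.
  intros Hy; set (h := fun n => fst (inner y (mixed_pow A y n 0))).
  assert (E : forall N, sum_f_R0 (fun n => fst (inner y (mixed_pow A y n 1))) N = h 0%nat - h (S N)).
  { induction N; [cbn [sum_f_R0] | rewrite tech5, IHN]; unfold h;
      [rewrite (Re_inner_mixed_pow_succ_l A HA y 0 0) | rewrite (Re_inner_mixed_pow_succ_l A HA y (S N) 0)];
      auto; ring. }
  destruct (ex_series_bounded_nonneg _ (h 0%nat) (fun n => Re_inner_mixed_pow_nonneg y n 1 Hy))
    as [Hex _]; [|exact Hex].
  intros N; rewrite E; unfold h; pose proof (Re_inner_mixed_pow_nonneg y (S N) 0 Hy); lra.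
Qed.

End Contraction.

End PositiveOperator.

Lemma density_symmetric A : density_operator A -> symmetric_op A.
Proof. intros [H1 [H2 [H3 [H4 _]]]]; split; auto. Qed.

Section MatrixOfSymmetric.
Variables (A : vec -> vec) (M : nat -> nat -> C).
Hypothesis HA : symmetric_op A.
Hypothesis HM : forall i j, inner (basis i) (A (basis j)) = M i j.

Lemma matrix_Hermitian i j : M i j = Cconj (M j i).
Proof. rewrite <- !HM, (sym_inner _ HA) by apply is_l2_basis; apply inner_conj. Qed.

Lemma symmetric_has_matrix : has_matrix A M.
Proof.
  intros w Hw i; rewrite <- (inner_basis i (A w)), (sym_inner _ HA) by auto using is_l2_basis.
  apply CSeries_ext; intros l; f_equal.
  rewrite <- (inner_basis l (A (basis i))), HM, (matrix_Hermitian i l).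
  unfold Cconj; destruct (M l i); simpl; f_equal; ring.
Qed.

End MatrixOfSymmetric.

Lemma density_positive A : density_operator A -> forall x, is_l2 x -> 0 <= fst (inner x (A x)).
Proof. intros [_ [_ [_ [_ [Hpos _]]]]]; exact Hpos. Qed.

Lemma density_trace_diag A M : density_operator A ->
  (forall i j, inner (basis i) (A (basis j)) = M i j) -> is_series (fun i => fst (M i i)) 1.
Proof.
  intros [_ [_ [_ [_ [_ Htr]]]]] HM; apply is_series_C_split in Htr as [Htr _].
  eapply is_series_ext, Htr; intros; cbv beta; rewrite HM; reflexivity.
Qed.

Section DensityMatrix.
Variables (A : vec -> vec) (M : nat -> nat -> C).
Hypothesis HD : density_operator A.
Hypothesis HM : forall i j, inner (basis i) (A (basis j)) = M i j.

Let HA := density_symmetric A HD.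
Let Hpos := density_positive A HD.
Let Hcontr := norm2_le_of_trace_one A HA Hpos M HM (density_trace_diag A M HD HM).
Let HmA := symmetric_has_matrix A M HA HM.

Lemma Re_inner_mixed_pow_basis_bounds n k i :
  0 <= fst (inner (basis i) (mixed_pow A (basis i) n (S k))) <= fst (M i i).
Proof.
  rewrite <- HM; split;
    [apply (Re_inner_mixed_pow_nonneg A HA Hpos Hcontr) | apply (Re_inner_mixed_pow_le A HA Hpos Hcontr)];
    apply is_l2_basis.
Qed.

Lemma ex_series_diag : ex_series (fun i => fst (M i i)).
Proof. exists 1; apply (density_trace_diag A M HD HM). Qed.

Lemma is_series_trace_power k : is_series (fun i => mpowS M k i i)
  (Series (fun i => fst (inner (basis i) (mixed_pow A (basis i) 0 (S k)))), 0).
Proof.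
  assert (Ediag : forall i, mpowS M k i i = inner (basis i) (mixed_pow A (basis i) 0 (S k))).
  { intros i; rewrite (mpowS_iter A M (sym_l2 A HA) HmA), inner_basis; reflexivity. }
  apply is_series_C_split; cbn [fst snd]; split.
  - eapply is_series_ext; [intros i; rewrite Ediag; reflexivity|].
    apply Series_correct, ex_series_Rle with (fun i => fst (M i i)), ex_series_diag.
    intros i; apply (Re_inner_mixed_pow_basis_bounds 0).
  - eapply is_series_ext; [|exact is_series_R0].
    intros i; rewrite Ediag, Im_inner_mixed_pow; auto using is_l2_basis.
Qed.

Lemma density_alternating_trace : alternating_trace_vanishes M.
Proof.
  exists (fun k => (Series (fun i => fst (inner (basis i) (mixed_pow A (basis i) 0 (S k)))), 0)).
  split; [exact is_series_trace_power|].
  apply filterlim_C_split; cbn [fst snd]; split.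
  - eapply is_lim_seq_ext.
    { intros n; symmetry; apply (alternating_trace_sum A M _ HA HmA is_series_trace_power n). }
    apply is_lim_seq_Series_dominated with (fun i => fst (M i i));
      [intros n i; apply Re_inner_mixed_pow_basis_bounds | apply ex_series_diag|].
    intros i; apply ex_series_lim_0, Re_inner_mixed_pow_summable; auto using is_l2_basis.
  - eapply is_lim_seq_ext; [|apply is_lim_seq_const]; intros n; cbv beta.
    rewrite sum_n_snd, sum_n_Reals, (sum_eq _ (fun _ => 0)), sum_cte by
      (intros k _; unfold Cmult, RtoC; cbn [fst snd]; ring).
    unfold RtoC; cbn [snd]; ring.
Qed.

End DensityMatrix.

(** * The operator of a Hilbert--Schmidt matrix *)

Lemma sum_f_R0_le_mono (f : nat -> R) N K :
  (forall n, 0 <= f n) -> (N <= K)%nat -> sum_f_R0 f N <= sum_f_R0 f K.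
Proof. intros H HK; induction HK; [lra | rewrite tech5; specialize (H (S m)); lra]. Qed.

Lemma sum_f_R0_swap (f : nat -> nat -> R) N J :
  sum_f_R0 (fun j => sum_f_R0 (fun i => f i j) N) J = sum_f_R0 (fun i => sum_f_R0 (fun j => f i j) J) N.
Proof.
  induction J; [reflexivity|].
  rewrite tech5, IHJ; simpl sum_f_R0 at 3; rewrite <- plus_sum; reflexivity.
Qed.

Lemma Hilbert_Schmidt_rows M : Hilbert_Schmidt_le1 M ->
  (forall i, ex_series (fun j => Cmod (M i j) ^ 2)) /\
  ex_series (fun i => Series (fun j => Cmod (M i j) ^ 2)) /\
  Series (fun i => Series (fun j => Cmod (M i j) ^ 2)) <= 1.
Proof.
  intros H; set (f := fun i j => Cmod (M i j) ^ 2).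
  assert (Hf : forall i j, 0 <= f i j) by (intros; apply pow2_ge_0).
  assert (Hsq : forall N J, sum_f_R0 (fun i => sum_f_R0 (f i) J) N <= 1).
  { intros N J; set (K := max N J); specialize (H K).
    rewrite sum_n_Reals, (sum_eq _ (fun i => sum_f_R0 (f i) K)) in H by (intros; apply sum_n_Reals).
    apply Rle_trans with (sum_f_R0 (fun i => sum_f_R0 (f i) K) N).
    - apply sum_Rle; intros i _; apply sum_f_R0_le_mono; auto; lia.
    - apply Rle_trans with (sum_f_R0 (fun i => sum_f_R0 (f i) K) K); auto.
      apply sum_f_R0_le_mono; [intros; apply cond_pos_sum; auto | lia]. }
  assert (Hrow : forall i, ex_series (f i)).
  { intros i; apply (ex_series_bounded_nonneg (f i) 1); auto; intros J.
    apply Rle_trans with (sum_f_R0 (fun i0 => sum_f_R0 (f i0) J) i); auto.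
    destruct i; [simpl; lra|].
    rewrite tech5; pose proof (cond_pos_sum (fun i0 => sum_f_R0 (f i0) J) i
                                 (fun n => cond_pos_sum _ J (Hf n))); lra. }
  assert (Hpart : forall N, sum_f_R0 (fun i => Series (f i)) N <= 1).
  { intros N; destruct (Series_lin_comb f (fun _ => 1) N Hrow) as [E1 E2].
    rewrite (sum_eq _ (fun k => 1 * Series (f k))), <- E2 by (intros; ring).
    apply (ex_series_bounded_nonneg _ 1).
    - intros j; apply cond_pos_sum; intros; rewrite Rmult_1_l; auto.
    - intros J; rewrite (sum_eq _ (fun j => sum_f_R0 (fun i => f i j) N)), sum_f_R0_swap; auto.
      intros j _; apply sum_eq; intros; ring. }
  destruct (ex_series_bounded_nonneg (fun i => Series (f i)) 1) as [B1 B2]; auto.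
  intros i; apply Series_nonneg; auto.
Qed.

Definition conj_row (M : nat -> nat -> C) (i : nat) : vec := fun j => Cconj (M i j).

Lemma matrix_op_conj_row M x i : matrix_op M x i = inner (conj_row M i) x.
Proof.
  unfold matrix_op, inner, conj_row; apply CSeries_ext; intros j; rewrite Cconj_conj; reflexivity.
Qed.

Section HilbertSchmidtMatrix.
Variable M : nat -> nat -> C.
Hypothesis HS : Hilbert_Schmidt_le1 M.

Lemma conj_row_l2 i : is_l2 (conj_row M i).
Proof.
  eapply ex_series_Rext, (proj1 (Hilbert_Schmidt_rows M HS) i).
  intros j; unfold conj_row; rewrite Cmod_conj; reflexivity.
Qed.

Lemma matrix_op_contraction x : is_l2 x -> is_l2 (matrix_op M x) /\ norm2 (matrix_op M x) <= norm2 x.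
Proof.
  intros Hx; destruct (Hilbert_Schmidt_rows M HS) as [_ [R2 R3]].
  set (r := fun i => Series (fun j => Cmod (M i j) ^ 2)).
  assert (Hb : forall i, 0 <= Cmod (matrix_op M x i) ^ 2 <= r i * norm2 x).
  { intros i; split; [apply pow2_ge_0|].
    replace (r i) with (norm2 (conj_row M i))
      by (apply Series_ext; intros j; unfold conj_row; rewrite Cmod_conj; reflexivity).
    rewrite matrix_op_conj_row; apply Cauchy_Schwarz; auto using conj_row_l2. }
  assert (Hex : ex_series (fun i => r i * norm2 x)) by (apply ex_series_scal_r; auto).
  split; [apply ex_series_Rle with (fun i => r i * norm2 x); auto|].
  unfold norm2 at 1; apply Rle_trans with (Series (fun i => r i * norm2 x)); [apply Series_le; auto|].
  rewrite Series_scal_r; pose proof (norm2_nonneg x Hx); fold r in R3; nra.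
Qed.

Lemma matrix_op_plus x y : is_l2 x -> is_l2 y ->
  matrix_op M (vplus x y) = vplus (matrix_op M x) (matrix_op M y).
Proof.
  intros Hx Hy; apply functional_extensionality; intros i; unfold vplus at 2.
  rewrite !matrix_op_conj_row; apply inner_plus_r; auto using conj_row_l2.
Qed.

Lemma matrix_op_scal c x : is_l2 x -> matrix_op M (vscal c x) = vscal c (matrix_op M x).
Proof.
  intros Hx; apply functional_extensionality; intros i; unfold vscal at 2.
  rewrite !matrix_op_conj_row; apply inner_scal_r; auto using conj_row_l2.
Qed.

Lemma matrix_op_minus x y : is_l2 x -> is_l2 y ->
  matrix_op M (vminus x y) = vminus (matrix_op M x) (matrix_op M y).
Proof.
  intros Hx Hy; rewrite !vminus_vplus, matrix_op_plus, matrix_op_scal; auto using is_l2_scal.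
Qed.

End HilbertSchmidtMatrix.

Definition trunc (N : nat) (x : vec) : vec := fun i => if Nat.leb i N then x i else RtoC 0.

Lemma trunc_l2 N x : is_l2 x -> is_l2 (trunc N x).
Proof.
  intros H; apply ex_series_Rle with (fun n => Cmod (x n) ^ 2); auto; intros n.
  unfold trunc; destruct (Nat.leb n N); split; try apply pow2_ge_0; try lra.
  rewrite Cmod_0, pow_i by lia; apply pow2_ge_0.
Qed.

Lemma trunc_finite_support N x n : (N < n)%nat -> trunc N x n = RtoC 0.
Proof. intros Hn; unfold trunc; rewrite (proj2 (Nat.leb_gt n N) Hn); reflexivity. Qed.

Lemma trunc_le N x n : (n <= N)%nat -> trunc N x n = x n.
Proof. intros Hn; unfold trunc; rewrite (proj2 (Nat.leb_le n N) Hn); reflexivity. Qed.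

Lemma norm2_minus_trunc N x : is_l2 x ->
  norm2 (vminus x (trunc N x)) = norm2 x - sum_f_R0 (fun i => Cmod (x i) ^ 2) N.
Proof.
  intros H; set (g := fun i => Cmod (trunc N x i) ^ 2).
  assert (Hg : is_series g (sum_f_R0 (fun i => Cmod (x i) ^ 2) N)).
  { rewrite <- sum_n_Reals, (sum_n_ext_loc _ g) by (intros; unfold g; rewrite trunc_le; auto).
    apply (is_series_finite_support (V := R_NormedModule)); intros n Hn.
    unfold g; rewrite trunc_finite_support, Cmod_0, pow_i by lia; reflexivity. }
  unfold norm2; rewrite <- (is_series_unique _ _ Hg), <- Series_minus by (auto; eexists; eauto).
  apply Series_ext; intros i; unfold vminus, g, trunc; destruct (Nat.leb i N).
  - replace (Cminus (x i) (x i)) with (RtoC 0) by csolve; rewrite Cmod_0; simpl; ring.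
  - replace (Cminus (x i) (RtoC 0)) with (x i) by csolve; rewrite Cmod_0; simpl; ring.
Qed.

Lemma norm2_minus_trunc_small x : is_l2 x ->
  forall eps, 0 < eps -> exists N, norm2 (vminus x (trunc N x)) < eps.
Proof.
  intros H eps He; destruct (Series_tail_small _ H eps He) as [N HN].
  exists N; specialize (HN N (le_n N)); rewrite norm2_minus_trunc by auto.
  apply Rabs_def2 in HN; unfold norm2; lra.
Qed.

Section HermitianMatrix.
Variable M : nat -> nat -> C.
Hypothesis HS : Hilbert_Schmidt_le1 M.
Hypothesis Hherm : forall i j, M i j = Cconj (M j i).

Lemma matrix_op_symmetric_trunc N x y : is_l2 y ->
  inner (trunc N x) (matrix_op M y) = inner (matrix_op M (trunc N x)) y.
Proof.
  intros Hy.
  assert (Hrow : forall i, ex_CSeries (fun j => Cmult (M i j) (y j))).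
  { intros i; apply (ex_CSeries_ext (fun j => Cmult (Cconj (conj_row M i j)) (y j))).
    - intros j; unfold conj_row; rewrite Cconj_conj; reflexivity.
    - apply ex_CSeries_inner; auto using conj_row_l2. }
  unfold inner at 1.
  rewrite (CSeries_finite_support _ N)
    by (intros n Hn; rewrite trunc_finite_support by auto; csolve).
  rewrite (sum_n_ext_loc _ (fun i => CSeries (fun j => Cmult (Cconj (x i)) (Cmult (M i j) (y j)))))
    by (intros i Hi; unfold matrix_op; rewrite trunc_le, <- CSeries_scal by auto; reflexivity).
  rewrite <- CSeries_sum_n by (intros; apply ex_CSeries_scal; auto).
  unfold inner; apply CSeries_ext; intros j; unfold matrix_op.
  rewrite (CSeries_finite_support _ N)
    by (intros n Hn; rewrite trunc_finite_support by auto; csolve).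
  rewrite sum_n_Cconj, <- (sum_n_mult_r (K := C_Ring)); apply sum_n_ext_loc; intros i Hi.
  rewrite trunc_le, (Hherm j i) by auto; change mult with Cmult; csolve.
Qed.

Lemma matrix_op_symmetric x y : is_l2 x -> is_l2 y ->
  inner x (matrix_op M y) = inner (matrix_op M x) y.
Proof.
  intros Hx Hy.
  assert (HMl2 := fun z Hz => proj1 (matrix_op_contraction M HS z Hz)).
  assert (HMle := fun z Hz => proj2 (matrix_op_contraction M HS z Hz)).
  set (D := Cminus (inner x (matrix_op M y)) (inner (matrix_op M x) y)).
  set (K := 2 * (norm2 (matrix_op M y) + norm2 y)).
  assert (Htail : forall N, Cmod D ^ 2 <= K * norm2 (vminus x (trunc N x))).
  { intros N; set (u := vminus x (trunc N x)).
    assert (Ht : is_l2 (trunc N x)) by (apply trunc_l2; auto).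
    assert (Hu : is_l2 u) by (apply is_l2_minus; auto).
    assert (ED : D = Cminus (inner u (matrix_op M y)) (inner (matrix_op M u) y)).
    { unfold D, u; rewrite inner_minus_l, matrix_op_minus, inner_minus_l,
        matrix_op_symmetric_trunc; auto; csolve. }
    assert (C1 := Cauchy_Schwarz u (matrix_op M y) Hu (HMl2 y Hy)).
    assert (C2 := Cauchy_Schwarz (matrix_op M u) y (HMl2 u Hu) Hy).
    assert (N1 := HMle u Hu).
    pose proof (norm2_nonneg _ Hu); pose proof (norm2_nonneg _ Hy);
      pose proof (norm2_nonneg _ (HMl2 u Hu)); pose proof (norm2_nonneg _ (HMl2 y Hy)).
    rewrite ED; eapply Rle_trans; [apply Cmod2_minus_le|]; unfold K; nra. }
  assert (HD : Cmod D ^ 2 <= 0).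
  { apply Rle_plus_epsilon; intros eps Heps.
    assert (HK : 0 <= K).
    { pose proof (norm2_nonneg _ (HMl2 y Hy)); pose proof (norm2_nonneg y Hy); unfold K; lra. }
    destruct (norm2_minus_trunc_small x Hx (eps / (K + 1))) as [N HN]; [apply Rdiv_lt_0_compat; lra|].
    specialize (Htail N).
    pose proof (norm2_nonneg _ (is_l2_minus _ _ Hx (trunc_l2 N x Hx))).
    assert (E : (K + 1) * (eps / (K + 1)) = eps) by (field; lra).
    nra. }
  apply Ceq_minus, Cmod_eq_0; pose proof (Cmod_ge_0 D); fold D; nra.
Qed.

Lemma matrix_op_symmetric_op : symmetric_op (matrix_op M).
Proof.
  split.
  - intros; apply matrix_op_contraction; auto.
  - apply matrix_op_plus; auto.
  - apply matrix_op_scal; auto.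
  - apply matrix_op_symmetric.
Qed.

End HermitianMatrix.

(** * Positivity from the trace condition *)

Lemma ratio_gap_le a b K : 0 < a -> 1 < K -> K * a <= b ->
  (K - 1) ^ 2 * a * (a + b) <= (b - a) ^ 2 * (K + 1).
Proof.
  intros Ha HK Hb.
  pose (s := (K - 1) * a); pose (t := b - a).
  assert (Hs : 0 < s) by (unfold s; nra); assert (Ht : s <= t) by (unfold s, t; nra).
  apply Rmult_le_reg_r with a; auto.
  replace ((K - 1) ^ 2 * a * (a + b) * a) with (s ^ 2 * (2 * a + t)) by (unfold s, t; ring).
  replace ((b - a) ^ 2 * (K + 1) * a) with (t ^ 2 * (s + 2 * a)) by (unfold s, t; ring).
  clearbody s t.
  assert (s ^ 2 * t <= t ^ 2 * s) by (assert (0 <= s * t * (t - s)) by (apply Rmult_le_pos; nra); nra).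
  assert (s ^ 2 * (2 * a) <= t ^ 2 * (2 * a)) by (apply Rmult_le_compat_r; nra).
  nra.
Qed.

(** With [a = |u|^2], [b = |w|^2] and [c = Re <u, w>], this bounds [|u - w|^2] from below. *)
Lemma gap_lower_bound a b c K : 0 < a -> 1 < K -> K * a <= b -> c ^ 2 <= a * b ->
  (K - 1) ^ 2 * a <= (a + b - 2 * c) * (2 * (K + 1)).
Proof.
  intros Ha HK Hb Hc.
  assert (Hab : 0 < a + b) by nra.
  assert (Hamgm : c ^ 2 <= ((a + b) / 2) ^ 2) by (pose proof (pow2_ge_0 (a - b)); nra).
  assert (Hc1 : c <= (a + b) / 2) by nra.
  assert (Hc2 : - ((a + b) / 2) <= c) by nra.
  assert (Hsq : (b - a) ^ 2 <= (a + b - 2 * c) * (2 * (a + b))).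
  { assert ((b - a) ^ 2 <= (a + b - 2 * c) * (a + b + 2 * c)) by nra.
    assert ((a + b - 2 * c) * (a + b + 2 * c) <= (a + b - 2 * c) * (2 * (a + b)))
      by (apply Rmult_le_compat_l; lra).
    lra. }
  assert (H4 := ratio_gap_le a b K Ha HK Hb).
  apply Rmult_le_reg_r with (a + b); auto.
  apply Rle_trans with ((b - a) ^ 2 * (K + 1)); auto.
  replace ((a + b - 2 * c) * (2 * (K + 1)) * (a + b))
    with ((a + b - 2 * c) * (2 * (a + b)) * (K + 1)) by ring.
  apply Rmult_le_compat_r; lra.
Qed.

(** [e_p = |(1 - A)^p x|^2] is log-convex ([e_(p+1)^2 <= e_p e_(p+2)] by Cauchy--Schwarz), and
    [e_1 > e_0] because [<x, (1 - A) x> > |x|^2]. *)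
Lemma norm2_compl_pow_growth A x : symmetric_op A -> is_l2 x -> fst (inner x (A x)) < 0 ->
  exists K, 1 < K /\ forall p,
    0 < norm2 (mixed_pow A x p 0) /\ K * norm2 (mixed_pow A x p 0) <= norm2 (mixed_pow A x (S p) 0).
Proof.
  intros HA Hx Hneg; assert (HAl2 := sym_l2 A HA).
  set (e := fun p => norm2 (mixed_pow A x p 0)).
  assert (Hx0 : 0 < e 0%nat).
  { destruct (Rle_lt_or_eq_dec 0 (norm2 x) (norm2_nonneg x Hx)) as [Hlt|Heq]; auto; exfalso.
    assert (C := Cauchy_Schwarz x (A x) Hx (HAl2 x Hx)); rewrite <- Heq in C.
    assert (C2 := fst2_le_Cmod2 (inner x (A x))); nra. }
  assert (Hlogc : forall p, e (S p) ^ 2 <= e p * e (S (S p))).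
  { intros p; unfold e; rewrite <- !Re_inner_self.
    replace (inner (mixed_pow A x (S p) 0) (mixed_pow A x (S p) 0))
      with (inner (mixed_pow A x p 0) (mixed_pow A x (S (S p)) 0))
      by (rewrite !inner_mixed_pow by auto; do 2 f_equal; lia).
    eapply Rle_trans; [apply fst2_le_Cmod2|]; rewrite !Re_inner_self.
    apply Cauchy_Schwarz; apply mixed_pow_l2; auto. }
  set (d := - fst (inner x (A x))).
  assert (He1 : (e 0%nat + d) ^ 2 <= e 0%nat * e 1%nat).
  { replace (e 0%nat + d) with (fst (inner x (mixed_pow A x 1 0))).
    - eapply Rle_trans; [apply fst2_le_Cmod2 | apply Cauchy_Schwarz; auto using mixed_pow_l2].
    - rewrite Re_inner_mixed_pow_succ_l by auto; unfold e, d; rewrite <- Re_inner_self; reflexivity. }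
  set (K := e 1%nat / e 0%nat).
  assert (HK : 1 < K).
  { unfold K; apply Rmult_lt_reg_r with (e 0%nat); [lra|].
    unfold Rdiv; rewrite Rmult_assoc, Rinv_l by lra.
    assert (0 < d) by (unfold d; lra); nra. }
  exists K; split; [exact HK|].
  change (forall p, 0 < e p /\ K * e p <= e (S p)).
  induction p as [|p [P1 P2]].
  - split; [lra | unfold K; right; field; lra].
  - specialize (Hlogc p); split; [nra|].
    apply Rmult_le_reg_l with (e p); auto.
    assert (0 < e (S p)) by nra.
    assert (K * e p * e (S p) <= e (S p) * e (S p)) by (apply Rmult_le_compat_r; lra).
    simpl in Hlogc; nra.
Qed.

(** [(1 - A)^m A x = (1 - A)^m x - (1 - A)^(m+1) x], and the squared norms of these two
    vectors differ by a factor at least [K > 1]. *)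
Lemma mixed_pow_norm2_lower_bound A x : symmetric_op A -> is_l2 x -> fst (inner x (A x)) < 0 ->
  exists delta, 0 < delta /\ forall m, delta <= norm2 (mixed_pow A x m 1).
Proof.
  intros HA Hx Hneg.
  destruct (norm2_compl_pow_growth A x HA Hx Hneg) as [K [HK Hgeom]].
  set (e := fun p => norm2 (mixed_pow A x p 0)).
  assert (Hmono : forall p, e 0%nat <= e p) by (induction p; [lra | destruct (Hgeom p); unfold e in *; nra]).
  exists ((K - 1) ^ 2 * e 0%nat / (2 * (K + 1))); split.
  { destruct (Hgeom 0%nat); apply Rdiv_lt_0_compat; [apply Rmult_lt_0_compat; unfold e; nra | lra]. }
  intros m.
  replace (mixed_pow A x m 1) with (vminus (mixed_pow A x m 0) (mixed_pow A x (S m) 0)).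
  2: { rewrite (mixed_pow_succ_l A HA x m 0) by auto; apply functional_extensionality.
       intros n; unfold vminus; csolve. }
  rewrite norm2_minus by auto using mixed_pow_l2; fold (e m) (e (S m)).
  destruct (Hgeom m) as [P1 P2]; fold (e m) (e (S m)) in P1, P2.
  assert (Cc : fst (inner (mixed_pow A x m 0) (mixed_pow A x (S m) 0)) ^ 2 <= e m * e (S m)).
  { eapply Rle_trans; [apply fst2_le_Cmod2 | apply Cauchy_Schwarz; auto using mixed_pow_l2]. }
  assert (G := gap_lower_bound _ _ _ K P1 HK P2 Cc).
  apply Rmult_le_reg_r with (2 * (K + 1)); [lra|].
  unfold Rdiv; rewrite Rmult_assoc, Rinv_l by lra.
  assert ((K - 1) ^ 2 * e 0%nat <= (K - 1) ^ 2 * e m)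
    by (apply Rmult_le_compat_l; [apply pow2_ge_0 | apply Hmono]).
  lra.
Qed.

Lemma norm2_mixed_pow_le A x m : symmetric_op A -> is_l2 x ->
  ex_series (fun i => norm2 (mixed_pow A (basis i) m 1)) ->
  norm2 (mixed_pow A x m 1) <= Series (fun i => norm2 (mixed_pow A (basis i) m 1)) * norm2 x.
Proof.
  intros HA Hx Hex; unfold norm2 at 1; rewrite <- Series_scal_r.
  apply Series_le; [|apply ex_series_scal_r; auto]; intros i; split; [apply pow2_ge_0|].
  rewrite <- (inner_basis i (mixed_pow A x m 1)), <- mixed_pow_adjoint by auto using is_l2_basis.
  apply Cauchy_Schwarz; auto using mixed_pow_l2, is_l2_basis.
Qed.

Section TraceCondition.
Variable M : nat -> nat -> C.
Hypothesis HS : Hilbert_Schmidt_le1 M.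
Hypothesis Hherm : forall i j, M i j = Cconj (M j i).
Hypothesis Htrace : alternating_trace_vanishes M.

Let A := matrix_op M.
Let HA : symmetric_op A := matrix_op_symmetric_op M HS Hherm.
Let HmA : has_matrix A M := fun w _ i => eq_refl.

(** [sum_i |(1 - A)^m A e_i|^2 = tr ((1 - A)^(2m) A^2) = t_(2m) - t_(2m+1)], where [t_n] is the
    sequence of condition (iii). *)
Lemma Hilbert_Schmidt_mixed_pow_vanishes :
  (forall m, ex_series (fun i => norm2 (mixed_pow A (basis i) m 1))) /\
  is_lim_seq (fun m => Series (fun i => norm2 (mixed_pow A (basis i) m 1))) 0.
Proof.
  destruct Htrace as [tr [Htr Hlim]]; apply filterlim_C_split in Hlim as [Hlim _].
  assert (Hsum := alternating_trace_sum A M tr HA HmA Htr).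
  set (t := fun n => Series (fun i => fst (inner (basis i) (mixed_pow A (basis i) n 1)))).
  assert (Ht : is_lim_seq t 0) by (eapply is_lim_seq_ext, Hlim; intros n; apply Hsum).
  assert (Eg : forall m i, norm2 (mixed_pow A (basis i) m 1)
      = fst (inner (basis i) (mixed_pow A (basis i) (2 * m) 1))
        - fst (inner (basis i) (mixed_pow A (basis i) (S (2 * m)) 1))).
  { intros m i; rewrite Re_inner_mixed_pow_succ_l, <- Re_inner_self, inner_mixed_pow
      by auto using is_l2_basis.
    replace (m + m)%nat with (2 * m)%nat by lia; simpl (1 + 1)%nat; ring. }
  assert (Hex : forall m, ex_series (fun i => norm2 (mixed_pow A (basis i) m 1))).
  { intros m; eapply ex_series_Rext; [intros i; symmetry; apply Eg|].
    apply ex_series_Rminus; apply Hsum. }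
  split; [exact Hex|].
  eapply is_lim_seq_ext.
  { intros m; symmetry; rewrite (Series_ext _ _ (Eg m)), Series_minus by apply Hsum; reflexivity. }
  replace 0 with (0 - 0) by ring.
  apply is_lim_seq_minus';
    [apply (is_lim_seq_subseq t 0 (fun m => 2 * m)%nat) | apply (is_lim_seq_subseq t 0 (fun m => S (2 * m)))];
    auto; apply eventually_subseq; intros; lia.
Qed.

Lemma matrix_op_positive x : is_l2 x -> 0 <= fst (inner x (A x)).
Proof.
  intros Hx; destruct Hilbert_Schmidt_mixed_pow_vanishes as [Hex Hlim].
  destruct (Rle_or_lt 0 (fst (inner x (A x)))) as [Hle|Hneg]; auto; exfalso.
  destruct (mixed_pow_norm2_lower_bound A x HA Hx Hneg) as [delta [Hd Hlow]].
  assert (Hup := fun m => norm2_mixed_pow_le A x m HA Hx (Hex m)).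
  assert (Hx0 : 0 < norm2 x).
  { destruct (Rle_lt_or_eq_dec 0 (norm2 x) (norm2_nonneg x Hx)) as [Hl|Heq]; auto.
    specialize (Hlow 0%nat); specialize (Hup 0%nat); rewrite <- Heq in Hup; lra. }
  apply is_lim_seq_spec in Hlim.
  destruct (Hlim (mkposreal (delta / norm2 x) (Rdiv_lt_0_compat _ _ Hd Hx0))) as [N HN].
  specialize (HN N (le_n N)); specialize (Hlow N); specialize (Hup N); simpl in HN.
  apply Rabs_def2 in HN; rewrite Rminus_0_r in HN; destruct HN as [HN _].
  assert (Series (fun i => norm2 (mixed_pow A (basis i) N 1)) * norm2 x < delta).
  { apply Rmult_lt_reg_r with (/ norm2 x); [apply Rinv_0_lt_compat; auto|].
    rewrite Rmult_assoc, Rinv_r by lra; lra. }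
  lra.
Qed.

Hypothesis Hdiag : is_series (fun i => M i i) (RtoC 1).

Lemma matrix_op_density : density_operator A.
Proof.
  split; [|split; [|split; [|split; [|split]]]].
  - apply (sym_l2 A HA).
  - apply (sym_plus A HA).
  - apply (sym_scal A HA).
  - apply (sym_inner A HA).
  - apply matrix_op_positive.
  - eapply is_series_ext, Hdiag; intros i; rewrite inner_basis; symmetry; apply matrix_op_basis.
Qed.

End TraceCondition.

Theorem theorem2p6 (M : nat -> nat -> C) :
  represents_state M <->
  ( (* (i) *)
    (forall N : nat,
       sum_n (fun i => sum_n (fun j => (Cmod (M i j)) ^ 2) N) N <= 1) /\
    (* (ii) *)
    (forall i j : nat, M i j = Cconj (M j i)) /\
    (* (iii) *)
    (exists tr : nat -> C,
       (forall k : nat, is_series (fun i => mpowS M k i i) (tr k)) /\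
       filterlim
         (fun n : nat =>
            sum_n (fun k => Cmult (RtoC ((-1) ^ k * Binomial.C n k)) (tr k)) n)
         eventually (locally (RtoC 0))) /\
    (* (iv) *)
    is_series (fun i => M i i) (RtoC 1) ).
Proof.
  split.
  - intros [A [HD HM]].
    assert (HA := density_symmetric A HD).
    split; [|split; [|split]].
    + exact (trace_one_Hilbert_Schmidt A HA (density_positive A HD) M HM (density_trace_diag A M HD HM)).
    + exact (matrix_Hermitian A M HA HM).
    + exact (density_alternating_trace A M HD HM).
    + destruct HD as [_ [_ [_ [_ [_ Htr]]]]].
      eapply is_series_ext, Htr; intros i; apply HM.
  - intros [HS [Hherm [Htrace Hdiag]]].
    exists (matrix_op M); split.
    + exact (matrix_op_density M HS Hherm Htrace Hdiag).
    + intros i j; rewrite inner_basis; apply matrix_op_basis.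
Qed.
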